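(* Let $M\ge1$ and let $x_{1:\infty}$ be an $M$-bounded displacement enumeration with respect to a language $K$, with arbitrary noise rate and possibly omissions. Then for any language $L\subseteq K$, $$\mu_{\rm low}(L,K)\ge\frac1M\liminf_{n\to\infty}\frac{|L\cap\{x_1,\dots,x_n\}|}{n},\qquad \mu_{\rm up}(L,K)\ge\frac1M\limsup_{n\to\infty}\frac{|L\cap\{x_1,\dots,x_n\}|}{n}.$$
   Context: The universe is $U=\mathbb{N}$ with its natural order; a language is an infinite subset of $U$, with canonical enumeration $\ell_1<\ell_2<\cdots$. For $A,B\subseteq\mathbb{N}$ with $B=\{b_1<b_2<\cdots\}$, $\mu_{\rm up}(A,B)=\limsup_n\frac1n|A\cap\{b_1,\dots,b_n\}|$ and $\mu_{\rm low}(A,B)=\liminf_n\frac1n|A\cap\{b_1,\dots,b_n\}|$. For $x\in U$, $\sigma(x,L)=j$ if $x=\ell_j$ and $0$ if $x\notin L$. A sequence $x_1,x_2,\dots$ of distinct elements of $U$ is an $M$-bounded displacement enumeration with respect to $L$ if there is $n^\star$ with $\sigma(x_n,L)\le Mn$ for all $n\ge n^\star$. *)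

From Stdlib Require Import Reals Lra Lia Arith List ClassicalEpsilon.
From Coquelicot Require Import Coquelicot.
Open Scope R_scope.

(* Subsets of U = nat are boolean predicates. *)
Definition language (A : nat -> bool) : Prop :=
  forall n : nat, exists m : nat, (n <= m)%nat /\ A m = true.

Definition subset (A B : nat -> bool) : Prop :=
  forall x, A x = true -> B x = true.

Definition count1 (f : nat -> bool) (n : nat) : nat :=
  length (filter f (seq 1 n)).

(* sigma(x, B) = j if x = b_j (1-indexed canonical enumeration), 0 if x notin B *)
Definition sigma (x : nat) (B : nat -> bool) : nat :=
  if B x then S (length (filter B (seq 0 x))) else 0%nat.

(* b_j : the j-th element (j >= 1) of B in increasing order *)
Definition enum_el (B : nat -> bool) (j : nat) : nat :=
  epsilon (inhabits 0%nat) (fun x => B x = true /\ sigma x B = j).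

Definition cnt_in_prefix (A B : nat -> bool) (n : nat) : nat :=
  count1 (fun j => A (enum_el B j)) n.

Definition ratio_seq (A B : nat -> bool) : nat -> R :=
  fun n => INR (cnt_in_prefix A B n) / INR n.

Definition mu_up (A B : nat -> bool) : Rbar := LimSup_seq (ratio_seq A B).
Definition mu_low (A B : nat -> bool) : Rbar := LimInf_seq (ratio_seq A B).

(* Enumerations x_1, x_2, ... are functions nat -> nat; index 0 is ignored. *)
Definition distinct_enum (x : nat -> nat) : Prop :=
  forall i j, (1 <= i)%nat -> (1 <= j)%nat -> x i = x j -> i = j.

Definition bounded_displacement (M : R) (x : nat -> nat) (L : nat -> bool) : Prop :=
  distinct_enum x /\
  exists nstar : nat, forall n : nat, (nstar <= n)%nat -> (1 <= n)%nat ->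
    INR (sigma (x n) L) <= M * INR n.

Definition enum_ratio (L : nat -> bool) (x : nat -> nat) : nat -> R :=
  fun n => INR (count1 (fun i => L (x i)) n) / INR n.

(* Write k_1 < k_2 < ... for the elements of K.  If M n <= m, every x_i in L with
   n* <= i <= n has sigma (x i) K <= M i <= m, and sigma is injective on K, so
   |L ∩ {x_1..x_n}| <= |L ∩ {k_1..k_m}| + n*.  Pairing each n with some m in [M n, M n + M]
   (and each m with such an n) turns this into a_n / M - O(1/m) <= b_m for the densities
   a_n = |L ∩ {x_1..x_n}| / n and b_m = |L ∩ {k_1..k_m}| / m, which passes to lim inf and
   lim sup. *)
From Pilot Require Import Defs.
From Stdlib Require Import Reals Lra Lia List ClassicalEpsilon Bool.
From Coquelicot Require Import Coquelicot.
Open Scope R_scope.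

Lemma length_filter_le_or {A : Type} (f g h : A -> bool) (l : list A) :
  (forall a, f a = true -> g a = true \/ h a = true) ->
  (length (filter f l) <= length (filter g l) + length (filter h l))%nat.
Proof.
  intros Hfgh. induction l as [|a l IH]; simpl; [lia|].
  destruct (f a) eqn:Ef, (g a) eqn:Eg, (h a) eqn:Eh; simpl; try lia.
  destruct (Hfgh a Ef); congruence.
Qed.

Lemma count1_le (f : nat -> bool) (n : nat) : (count1 f n <= n)%nat.
Proof.
  unfold count1. rewrite <- (length_seq n 1) at 2. apply filter_length_le.
Qed.

Lemma count1_le_tail (f : nat -> bool) (n s : nat) :
  (count1 f n <= count1 (fun i => (s <=? i)%nat && f i) n + s)%nat.
Proof.
  unfold count1.
  eapply Nat.le_trans.
  { apply (length_filter_le_or _ (fun i => (s <=? i)%nat && f i) (fun i => (i <? s)%nat)).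
    intros i Hi. rewrite Hi, andb_true_r.
    destruct (Nat.leb_spec s i); [left | right; apply Nat.ltb_lt]; auto. }
  apply Nat.add_le_mono_l.
  transitivity (length (seq 0 s)); [|now rewrite length_seq].
  apply NoDup_incl_length.
  - apply NoDup_filter, seq_NoDup.
  - intros i Hi. apply filter_In in Hi as [_ Hi]. apply Nat.ltb_lt in Hi.
    apply in_seq. lia.
Qed.

Lemma count1_le_injective (f g : nat -> bool) (phi : nat -> nat) (n m : nat) :
  (forall i, (1 <= i <= n)%nat -> f i = true -> (1 <= phi i <= m)%nat /\ g (phi i) = true) ->
  (forall i j, (1 <= i <= n)%nat -> (1 <= j <= n)%nat -> f i = true -> f j = true ->
     phi i = phi j -> i = j) ->
  (count1 f n <= count1 g m)%nat.
Proof.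
  intros Hmaps Hinj. unfold count1. rewrite <- (length_map phi).
  apply NoDup_incl_length.
  - apply NoDup_map_NoDup_ForallPairs; [|apply NoDup_filter, seq_NoDup].
    intros i j Hi Hj. apply filter_In in Hi as [Hi Hfi], Hj as [Hj Hfj].
    apply in_seq in Hi, Hj. apply Hinj; auto; lia.
  - intros k Hk. apply in_map_iff in Hk as [i [<- Hi]].
    apply filter_In in Hi as [Hi Hfi]. apply in_seq in Hi.
    destruct (Hmaps i ltac:(lia) Hfi) as [Hrange Hg].
    apply filter_In. split; [apply in_seq; lia | exact Hg].
Qed.

(* [sigma] is qualified as [Defs.sigma] because Reals also exports a [sigma]. *)
Lemma sigma_injective (K : nat -> bool) (y z : nat) :
  K y = true -> K z = true -> Defs.sigma y K = Defs.sigma z K -> y = z.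
Proof.
  assert (Hlt : forall u v, (u < v)%nat -> K u = true ->
            (S (length (filter K (seq 0 u))) <= length (filter K (seq 0 v)))%nat).
  { intros u v Huv Ku. replace v with (u + S (v - u - 1))%nat by lia.
    rewrite seq_app, filter_app, length_app. simpl. rewrite Ku. simpl. lia. }
  unfold Defs.sigma. intros Ky Kz. rewrite Ky, Kz. intros E.
  destruct (Nat.lt_trichotomy y z) as [H|[H|H]]; auto.
  - specialize (Hlt y z H Ky). lia.
  - specialize (Hlt z y H Kz). lia.
Qed.

Lemma enum_el_sigma (K : nat -> bool) (y : nat) :
  K y = true -> enum_el K (Defs.sigma y K) = y.
Proof.
  intros Ky. unfold enum_el.
  destruct (epsilon_spec (inhabits 0%nat)
              (fun z => K z = true /\ Defs.sigma z K = Defs.sigma y K)) as [Kz E].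
  { exists y. auto. }
  apply (sigma_injective K); auto.
Qed.

Lemma count_enum_le_prefix (x : nat -> nat) (K L : nat -> bool) (s n m : nat) :
  subset L K -> distinct_enum x ->
  (forall i, (s <= i)%nat -> (1 <= i <= n)%nat -> (Defs.sigma (x i) K <= m)%nat) ->
  (count1 (fun i => L (x i)) n <= cnt_in_prefix L K m + s)%nat.
Proof.
  intros HLK Hx Hsigma.
  eapply Nat.le_trans; [apply (count1_le_tail _ _ s)|].
  apply Nat.add_le_mono_r, (count1_le_injective _ _ (fun i => Defs.sigma (x i) K)).
  - intros i Hi Hfi. apply andb_true_iff in Hfi as [Hsi Lxi].
    apply Nat.leb_le in Hsi.
    assert (Kxi : K (x i) = true) by auto.
    split; [|rewrite enum_el_sigma; auto].
    split; [unfold Defs.sigma; rewrite Kxi; lia | auto].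
  - intros i j Hi Hj Hfi Hfj E.
    apply andb_true_iff in Hfi as [_ Lxi], Hfj as [_ Lxj].
    apply Hx; try lia. apply (sigma_injective K); auto.
Qed.

Lemma displacement_count_bound (M : R) (x : nat -> nat) (K L : nat -> bool) :
  0 <= M -> subset L K -> bounded_displacement M x K ->
  exists s : nat, forall n m : nat, M * INR n <= INR m ->
    INR (count1 (fun i => L (x i)) n) <= INR (cnt_in_prefix L K m) + INR s.
Proof.
  intros HM HLK [Hx [s Hs]]. exists s. intros n m Hnm.
  rewrite <- plus_INR. apply le_INR, count_enum_le_prefix; auto.
  intros i Hsi Hi. apply INR_le.
  assert (M * INR i <= M * INR n) by (apply Rmult_le_compat_l; [lra | apply le_INR; lia]).
  specialize (Hs i Hsi ltac:(lia)). lra.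
Qed.

Lemma Rbar_le_of_forall_lt (x : R) (y : Rbar) :
  (forall r, r < x -> Rbar_le r y) -> Rbar_le x y.
Proof.
  intros H. destruct y as [y| |]; simpl; auto.
  - destruct (Rle_or_lt x y) as [Hxy|Hyx]; auto.
    specialize (H ((x + y) / 2) ltac:(lra)). simpl in H. lra.
  - exact (H (x - 1) ltac:(lra)).
Qed.

Lemma LimInf_seq_ge_eventually (u : nat -> R) (r : R) :
  eventually (fun n => r <= u n) -> Rbar_le r (LimInf_seq u).
Proof.
  intros Hev. rewrite <- (LimInf_seq_const r). exact (LimInf_le _ _ Hev).
Qed.

Lemma LimSup_seq_ge_frequently (u : nat -> R) (r : R) :
  (forall N, exists n, (N <= n)%nat /\ r <= u n) -> Rbar_le r (LimSup_seq u).
Proof.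
  intros Hfreq. destruct (ex_LimSup_seq u) as [l Hl].
  rewrite (is_LimSup_seq_unique _ _ Hl).
  destruct l as [l| |]; simpl in *; auto.
  - destruct (Rle_or_lt r l) as [Hrl|Hlr]; auto.
    destruct (Hl (mkposreal (r - l) ltac:(lra))) as [_ [N HN]]; simpl in HN.
    destruct (Hfreq N) as [n [Hn Hrn]]. specialize (HN n Hn). lra.
  - destruct (Hl r) as [N HN]. destruct (Hfreq N) as [n [Hn Hrn]].
    specialize (HN n Hn). lra.
Qed.

Lemma LimInf_LimSup_seq_unit (u : nat -> R) : (forall n, 0 <= u n <= 1) ->
  Rbar_le 0 (LimInf_seq u) /\ Rbar_le (LimSup_seq u) 1.
Proof.
  intros Hu. rewrite <- (LimInf_seq_const 0), <- (LimSup_seq_const 1).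
  split; [apply LimInf_le | apply LimSup_le]; exists 0%nat; intros n _; apply Hu.
Qed.

Lemma is_LimInf_seq_unit (u : nat -> R) : (forall n, 0 <= u n <= 1) ->
  exists l : R, is_LimInf_seq u l.
Proof.
  intros Hu. destruct (LimInf_LimSup_seq_unit u Hu) as [H0 H1].
  pose proof (LimSup_LimInf_seq_le u) as Hle.
  destruct (ex_LimInf_seq u) as [l Hl]. rewrite (is_LimInf_seq_unique _ _ Hl) in *.
  destruct l as [l| |], (LimSup_seq u); simpl in *; try tauto. eauto.
Qed.

Lemma is_LimSup_seq_unit (u : nat -> R) : (forall n, 0 <= u n <= 1) ->
  exists l : R, is_LimSup_seq u l.
Proof.
  intros Hu. destruct (LimInf_LimSup_seq_unit u Hu) as [H0 H1].
  pose proof (LimSup_LimInf_seq_le u) as Hle.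
  destruct (ex_LimSup_seq u) as [l Hl]. rewrite (is_LimSup_seq_unique _ _ Hl) in *.
  destruct l as [l| |], (LimInf_seq u); simpl in *; try tauto. eauto.
Qed.

Lemma eventually_div_INR_lt (r eps : R) : 0 < eps ->
  exists N, forall m, (N <= m)%nat -> r / INR m < eps.
Proof.
  intros Heps. destruct (INR_unbounded (r / eps)) as [N HN].
  exists (S N). intros m Hm.
  assert (HNm : INR N < INR m) by (apply lt_INR; lia).
  assert (0 < INR m) by (pose proof (pos_INR N); lra).
  apply Rlt_div_l; auto.
  apply Rlt_div_l in HN; auto. nra.
Qed.

Definition ratio (c : nat -> nat) (n : nat) : R := INR (c n) / INR n.

Lemma ratio_bounds (c : nat -> nat) (n : nat) : (c n <= n)%nat -> 0 <= ratio c n <= 1.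
Proof.
  intros Hc. unfold ratio. destruct n as [|n].
  - simpl. rewrite Rdiv_0_r. lra.
  - apply le_INR in Hc. pose proof (pos_INR (c (S n))).
    assert (0 < INR (S n)) by (apply lt_0_INR; lia).
    split; [apply Rdiv_le_0_compat | apply Rle_div_l]; lra.
Qed.

Section RatioComparison.

Variables (c d : nat -> nat) (M s : R).
Hypothesis M_ge1 : 1 <= M.
Hypothesis c_le : forall n, (c n <= n)%nat.
Hypothesis c_le_d : forall n m, M * INR n <= INR m -> INR (c n) <= INR (d m) + s.

Lemma partner_below (m : nat) : exists n, M * INR n <= INR m <= M * INR n + M.
Proof.
  assert (Hm : 0 <= INR m / M) by (apply Rdiv_le_0_compat; [apply pos_INR | lra]).
  destruct (nfloor_ex _ Hm) as [n Hn]. exists n.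
  assert (HmM : M * (INR m / M) = INR m) by (field; lra).
  split; nra.
Qed.

Lemma partner_above (n : nat) :
  exists m, (n <= m)%nat /\ M * INR n <= INR m <= M * INR n + M.
Proof.
  assert (Hn : 0 <= M * INR n) by (pose proof (pos_INR n); nra).
  destruct (nfloor_ex _ Hn) as [k Hk]. exists (S k). rewrite S_INR.
  split; [|lra].
  apply INR_le. rewrite S_INR. pose proof (pos_INR n). nra.
Qed.

Lemma ratio_transfer (l : R) (n m : nat) : (1 <= n)%nat ->
  M * INR n <= INR m <= M * INR n + M -> l <= ratio c n ->
  l / M - (1 + s) / INR m <= ratio d m.
Proof.
  intros Hn [Hlo Hhi] Hl.
  assert (Hn1 : 1 <= INR n) by (apply (le_INR 1); exact Hn).
  assert (Hm : 0 < INR m) by nra.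
  assert (Hc1 := proj2 (ratio_bounds c n (c_le n))).
  assert (Hcn : INR n * ratio c n = INR (c n)) by (unfold ratio; field; lra).
  assert (Hdm : INR m * ratio d m = INR (d m)) by (unfold ratio; field; lra).
  assert (Hs : INR m * ((1 + s) / INR m) = 1 + s) by (field; lra).
  assert (HlM : l / M <= ratio c n / M)
    by (apply Rmult_le_compat_r; [apply Rlt_le, Rinv_0_lt_compat; lra | exact Hl]).
  (* [m / M <= n + 1], and [ratio c n <= 1] absorbs the [+ 1]. *)
  assert (Hkey : INR m * (ratio c n / M) <= INR (c n) + 1).
  { assert (HMn : (M * INR n + M) * (ratio c n / M) = INR (c n) + ratio c n)
      by (rewrite <- Hcn; field; lra).
    assert (0 <= ratio c n / M)
      by (apply Rdiv_le_0_compat; [apply (ratio_bounds c n (c_le n)) | lra]).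
    nra. }
  pose proof (c_le_d n m Hlo). nra.
Qed.

Lemma liminf_transfer (l eps : R) : 0 < eps ->
  eventually (fun n => l - eps < ratio c n) ->
  eventually (fun m => (l - eps) / M - eps <= ratio d m).
Proof.
  intros Heps [N HN].
  destruct (eventually_div_INR_lt (1 + s) eps Heps) as [N0 HN0].
  destruct (INR_unbounded (M * INR (S (S N)))) as [N1 HN1].
  exists (max N0 N1). intros m Hm.
  destruct (partner_below m) as [n Hnm].
  assert (HNn : (S N <= n)%nat).
  { assert (INR N1 <= INR m) by (apply le_INR; lia).
    assert (Hlt : M * INR (S (S N)) < M * INR (S n)) by (rewrite (S_INR n); lra).
    apply Rmult_lt_reg_l, INR_lt in Hlt; [lia | lra]. }
  pose proof (ratio_transfer (l - eps) n m ltac:(lia) Hnm (Rlt_le _ _ (HN n ltac:(lia)))).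
  specialize (HN0 m ltac:(lia)). lra.
Qed.

Lemma limsup_transfer (l eps : R) : 0 < eps ->
  (forall N, exists n, (N <= n)%nat /\ l - eps < ratio c n) ->
  forall N, exists m, (N <= m)%nat /\ (l - eps) / M - eps <= ratio d m.
Proof.
  intros Heps Hfreq N.
  destruct (eventually_div_INR_lt (1 + s) eps Heps) as [N0 HN0].
  destruct (Hfreq (max (max N N0) 1)) as [n [Hn Hcn]].
  destruct (partner_above n) as [m [Hnm Hm]].
  exists m. split; [lia|].
  pose proof (ratio_transfer (l - eps) n m ltac:(lia) Hm (Rlt_le _ _ Hcn)).
  specialize (HN0 m ltac:(lia)). lra.
Qed.

Lemma exists_eps_margin (l r : R) : r < / M * l ->
  exists eps, 0 < eps /\ r <= (l - eps) / M - eps.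
Proof.
  intros Hr. exists ((/ M * l - r) / 2). split; [lra|].
  assert (HM : 0 < / M <= 1)
    by (split; [apply Rinv_0_lt_compat | rewrite <- Rinv_1; apply Rinv_le_contravar]; lra).
  unfold Rdiv at 1. nra.
Qed.

Lemma LimInf_ratio_le :
  Rbar_le (Rbar_mult (/ M) (LimInf_seq (ratio c))) (LimInf_seq (ratio d)).
Proof.
  destruct (is_LimInf_seq_unit (ratio c) (fun n => ratio_bounds c n (c_le n))) as [l Hl].
  rewrite (is_LimInf_seq_unique _ _ Hl). simpl.
  apply Rbar_le_of_forall_lt. intros r Hr.
  destruct (exists_eps_margin l r Hr) as [eps [Heps Hr_eps]].
  destruct (Hl (mkposreal eps Heps)) as [_ Hev].
  eapply Rbar_le_trans; [|apply LimInf_seq_ge_eventually, (liminf_transfer l eps Heps Hev)].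
  exact Hr_eps.
Qed.

Lemma LimSup_ratio_le :
  Rbar_le (Rbar_mult (/ M) (LimSup_seq (ratio c))) (LimSup_seq (ratio d)).
Proof.
  destruct (is_LimSup_seq_unit (ratio c) (fun n => ratio_bounds c n (c_le n))) as [l Hl].
  rewrite (is_LimSup_seq_unique _ _ Hl). simpl.
  apply Rbar_le_of_forall_lt. intros r Hr.
  destruct (exists_eps_margin l r Hr) as [eps [Heps Hr_eps]].
  destruct (Hl (mkposreal eps Heps)) as [Hfreq _].
  eapply Rbar_le_trans; [|apply LimSup_seq_ge_frequently, (limsup_transfer l eps Heps Hfreq)].
  exact Hr_eps.
Qed.

End RatioComparison.

Theorem lemma7p6 (M : R) (x : nat -> nat) (K L : nat -> bool) :
  1 <= M ->
  language K -> language L -> subset L K ->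
  bounded_displacement M x K ->
  Rbar_le (Rbar_mult (Finite (/ M)) (LimInf_seq (enum_ratio L x))) (mu_low L K) /\
  Rbar_le (Rbar_mult (Finite (/ M)) (LimSup_seq (enum_ratio L x))) (mu_up L K).
Proof.
  intros HM _ _ HLK Hx.
  destruct (displacement_count_bound M x K L ltac:(lra) HLK Hx) as [s Hs].
  split.
  - exact (LimInf_ratio_le _ (cnt_in_prefix L K) M (INR s) HM (count1_le _) Hs).
  - exact (LimSup_ratio_le _ (cnt_in_prefix L K) M (INR s) HM (count1_le _) Hs).
Qed.
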